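(* Let $(V,g)$ be an $n$-dimensional Euclidean vector space, let $\mathfrak{R}\colon \Lambda^2 V \to \Lambda^2 V$ be an algebraic curvature operator with eigenvalues $\lambda_1 \leq \ldots \leq \lambda_{\binom{n}{2}}$, and let $T \in \mathcal{T}^{(0,k)}(V)$. Suppose there is a real number $C \geq 1$ such that $$ |LT|^2 \leq \frac{1}{C} |\hat{T}|^2 |L|^2 \quad \text{for all } L \in \mathfrak{so}(V). $$ Let $\kappa \leq 0$. If $\frac{1}{\lfloor C \rfloor}(\lambda_1 + \ldots + \lambda_{\lfloor C \rfloor}) \geq \kappa$, then $g(\mathfrak{R}(\hat{T}), \hat{T}) \geq \kappa |\hat{T}|^2$. If $\lambda_1 + \ldots + \lambda_{\lfloor C \rfloor} > 0$, then $g(\mathfrak{R}(\hat{T}), \hat{T}) > 0$ unless $\hat{T} = 0$.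
   Context: $\mathcal{T}^{(0,k)}(V)$ is the space of $(0,k)$-tensors, with norm $|T|^2 = \sum_{i_1,\ldots,i_k} T_{i_1\ldots i_k}^2$ in any orthonormal basis. $\mathfrak{so}(V)$ is identified with $\Lambda^2 V$ via $(X \wedge Y)(Z) = g(X,Z)Y - g(Y,Z)X$, and $\Lambda^2 V$ carries the inner product for which $\{e_i \wedge e_j\}_{i<j}$ is orthonormal whenever $\{e_i\}$ is; $|L|$ is the corresponding norm. For $L \in \mathfrak{so}(V)$, $(LT)(X_1,\ldots,X_k) = -\sum_{i=1}^k T(X_1,\ldots,LX_i,\ldots,X_k)$. The tensor $\hat{T} \in \Lambda^2 V \otimes \mathcal{T}^{(0,k)}(V)$ is defined by $g(L, \hat{T}(X_1,\ldots,X_k)) = (LT)(X_1,\ldots,X_k)$ for all $L$; equivalently $\hat{T} = \sum_\alpha \Xi_\alpha \otimes \Xi_\alpha T$ for any orthonormal basis $\{\Xi_\alpha\}$ of $\Lambda^2 V$, so $|\hat{T}|^2 = \sum_\alpha |\Xi_\alpha T|^2$. Further $\mathfrak{R}(\hat{T}) = \sum_\alpha \mathfrak{R}(\Xi_\alpha) \otimes \Xi_\alpha T$ and $g(\mathfrak{R}(\hat{T}),\hat{T}) = \sum_{\alpha,\beta} g(\mathfrak{R}(\Xi_\alpha),\Xi_\beta)\, g(\Xi_\alpha T, \Xi_\beta T)$. An algebraic curvature operator is a self-adjoint map $\mathfrak{R}$ on $\Lambda^2 V$ whose associated tensor $\operatorname{Rm}(x,y,z,w) = g(\mathfrak{R}(x\wedge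 y), z \wedge w)$ satisfies the first Bianchi identity. *)

(* V = R^n with its standard (orthonormal) basis e_0..e_{n-1}. *)
From HB Require Import structures.
From mathcomp Require Import all_boot all_order all_algebra.
From mathcomp Require Import reals.
Set Implicit Arguments. Unset Strict Implicit. Unset Printing Implicit Defensive.
Import Order.TTheory GRing.Theory Num.Theory.
Local Open Scope ring_scope.

(* Index set of the orthonormal basis {e_a /\ e_b}_{a<b} of Lambda^2 V. *)
Definition pairT (n : nat) := {p : 'I_n * 'I_n | (p.1 < p.2)%N}.
Definition N2 (n : nat) : nat := #|{: pairT n}|.
Definition pr (n : nat) (al : 'I_(N2 n)) : 'I_n * 'I_n :=
  val (@enum_val (pairT n) predT al).

Section Defs.
Variable R : realType.
Variable n k : nat.

(* Elements of Lambda^2 V = so(V): coordinate row vectors in the basis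
   {e_a /\ e_b}_{a<b}; this basis is orthonormal by convention. *)
Definition bivec := 'rV[R]_(N2 n).

Definition wedge (a b : 'I_n) : bivec :=
  \row_(al < N2 n) (if pr al == (a, b) then 1
                    else if pr al == (b, a) then -1 else 0).

Definition bnorm2 (L : bivec) : R := \sum_(al < N2 n) L 0 al ^+ 2.

(* The endomorphism of V given by L, via (X/\Y)(Z) = g(X,Z) Y - g(Y,Z) X:
   Lmat L a c = c-th coordinate of L(e_a). *)
Definition Lmat (L : bivec) (a c : 'I_n) : R :=
  \sum_(al < N2 n) L 0 al *
     ((((pr al).1 == a) && ((pr al).2 == c))%:R
      - (((pr al).2 == a) && ((pr al).1 == c))%:R).

(* (0,k)-tensors, given by their components in the basis e. *)
Definition tensor := {ffun 'I_k -> 'I_n} -> R.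

Definition tnorm2 (T : tensor) : R := \sum_(i : {ffun 'I_k -> 'I_n}) T i ^+ 2.

Definition upd (idx : {ffun 'I_k -> 'I_n}) (i : 'I_k) (c : 'I_n)
  : {ffun 'I_k -> 'I_n} := [ffun j => if j == i then c else idx j].

(* (L T)(X_1..X_k) = - sum_i T(X_1,..,L X_i,..,X_k), in components *)
Definition actT (L : bivec) (T : tensor) : tensor :=
  fun idx => - \sum_(i < k) \sum_(c < n) Lmat L (idx i) c * T (upd idx i c).

(* hat T = sum_alpha Xi_alpha (x) Xi_alpha T, with Xi the standard
   orthonormal basis of Lambda^2 V: component (alpha, idx). *)
Definition That (T : tensor) (al : 'I_(N2 n)) : tensor :=
  actT (delta_mx 0 al) T.

Definition That_norm2 (T : tensor) : R :=
  \sum_(al < N2 n) tnorm2 (That T al).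

(* Curvature operator as the symmetric matrix Rop with
   Rop al be = g(Rfrak(Xi_al), Xi_be). *)
Definition Rm (Rop : 'M[R]_(N2 n)) (a b c d : 'I_n) : R :=
  (wedge a b *m Rop *m (wedge c d)^T) 0 0.

Definition algebraic_curvature_operator (Rop : 'M[R]_(N2 n)) : Prop :=
  Rop^T = Rop /\
  forall x y z w : 'I_n,
    Rm Rop x y z w + Rm Rop y z x w + Rm Rop z x y w = 0.

(* g(Rfrak(hat T), hat T) = sum_{al,be} g(Rfrak(Xi_al),Xi_be) g(Xi_al T, Xi_be T) *)
Definition RThat (Rop : 'M[R]_(N2 n)) (T : tensor) : R :=
  \sum_(al < N2 n) \sum_(be < N2 n)
     Rop al be * \sum_(i : {ffun 'I_k -> 'I_n}) That T al i * That T be i.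

Definition sorted_eigenvalues (Rop : 'M[R]_(N2 n)) (lam : 'I_(N2 n) -> R) : Prop :=
  (forall i j : 'I_(N2 n), (i <= j)%N -> lam i <= lam j) /\
  char_poly Rop = \prod_(i < N2 n) ('X - (lam i)%:P).

(* lambda_1 + ... + lambda_m (terms beyond binom(n,2) are absent) *)
Definition eig_partial_sum (lam : 'I_(N2 n) -> R) (m : nat) : R :=
  \sum_(i < N2 n | (i < m)%N) lam i.

End Defs.

(* Let G be the Gram matrix G_{ab} = <Xi_a T, Xi_b T> of the components of
   hat T.  Its trace is |hat T|^2, and its quadratic form x |-> x^T G x is
   |L_x T|^2 for L_x = sum_a x_a Xi_a, so the hypothesis says it is at most
   (|hat T|^2 / C) |x|^2.  Diagonalising the curvature operator in an
   orthonormal eigenbasis gives g(R(hat T), hat T) = tr(R G) = sum_g lambda_g w_g,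
   where w_g is the value of the form of G on the g-th eigenvector; hence
   0 <= w_g <= |hat T|^2 / C <= |hat T|^2 / floor C and sum_g w_g = |hat T|^2.
   A weighted sum of eigenvalues with weights capped at q and total mass
   q * m is smallest when the mass sits on the m smallest eigenvalues, so
   g(R(hat T), hat T) >= (|hat T|^2 / floor C) (lambda_1 + ... + lambda_{floor C}),
   and both claims follow. *)

From HB Require Import structures.
From mathcomp Require Import all_boot all_order all_algebra.
From mathcomp Require Import reals complex ring zify.
Import Order.TTheory GRing.Theory Num.Theory.
Local Open Scope ring_scope.
Set Implicit Arguments. Unset Strict Implicit.

Lemma shift_min_mul_le (R : realFieldType) (x w mu q : R) :
  0 <= w <= q -> mu * w + q * Num.min (x - mu) 0 <= x * w.
Proof.
case/andP=> w_ge0 w_le; have [mu_le | x_lt] := leP mu x.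
  rewrite min_r; last by rewrite subr_ge0.
  by rewrite mulr0 addr0; apply: ler_wpM2r.
rewrite min_l; last by rewrite subr_le0 ltW.
rewrite -subr_ge0.
have -> : x * w - (mu * w + q * (x - mu)) = (mu - x) * (q - w) by ring.
by rewrite mulr_ge0 // subr_ge0 // ltW.
Qed.

Section SortedPartialSums.
Variables (R : realFieldType) (N : nat) (lam : 'I_N -> R).
Hypothesis lam_sorted : forall i j : 'I_N, (i <= j)%N -> lam i <= lam j.

Lemma sum_min_sorted (i0 : 'I_N) :
  \sum_i Num.min (lam i - lam i0) 0
  = \sum_(i < N | (i < i0.+1)%N) lam i - lam i0 *+ i0.+1.
Proof.
rewrite (bigID (fun i : 'I_N => (i < i0.+1)%N)) /=.
rewrite [X in _ + X]big1 ?addr0 => [|i]; last first.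
  by rewrite -leqNgt => /ltnW/lam_sorted le_i0i; rewrite min_r // subr_ge0.
rewrite (eq_bigr (fun i => lam i - lam i0)) => [|i]; last first.
  by rewrite ltnS => /lam_sorted le_ii0; rewrite min_l // subr_le0.
rewrite sumrB -(big_ord_widen N (fun _ => lam i0)) //.
by rewrite sumr_const card_ord.
Qed.

(* For m <= N, sum shift_min_mul_le with mu = lam_(m-1): the min terms only
   depend on the multiset of the d g, and sum_min_sorted evaluates them.
   For m > N the total mass q * m cannot fit under the caps unless q = 0. *)
Lemma partial_sum_le_weighted (d w : 'I_N -> R) (q : R) (m : nat) :
  perm_eq [seq d i | i <- index_enum 'I_N] [seq lam i | i <- index_enum 'I_N] ->
  (0 < m)%N -> (forall g, 0 <= w g <= q) -> \sum_g w g = q *+ m ->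
  q * \sum_(i < N | (i < m)%N) lam i <= \sum_g d g * w g.
Proof.
move=> d_lam m_gt0 w_bnd w_sum.
have [m_le | N_lt] := leqP m N.
  have i0_lt : (m.-1 < N)%N by lia.
  pose i0 := Ordinal i0_lt; have m_eq : m = i0.+1 by rewrite /= prednK.
  rewrite m_eq in w_sum *.
  apply: le_trans (ler_sum _ (fun g _ => shift_min_mul_le (d g) (lam i0) (w_bnd g))).
  have min_perm : \sum_g Num.min (d g - lam i0) 0 = \sum_i Num.min (lam i - lam i0) 0.
    pose f x := Num.min (x - lam i0) 0.
    by rewrite -(big_map d xpredT f) -(big_map lam xpredT f); exact: perm_big.
  rewrite big_split /= -!mulr_sumr w_sum min_perm sum_min_sorted.
  by rewrite mulrBr [lam i0 * _]mulrC mulrnAl -mulrnAr addrC subrK.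
have w_ge0 g : 0 <= w g by case/andP: (w_bnd g).
have w_le g : w g <= q by case/andP: (w_bnd g).
have q_ge0 : 0 <= q by rewrite -(pmulrn_lge0 _ m_gt0) -w_sum sumr_ge0.
have q0 : q = 0.
  have w_le_N : q *+ m <= q *+ N.
    rewrite -w_sum; apply: le_trans (ler_sum _ (fun g _ => w_le g)) _.
    by rewrite sumr_const card_ord.
  apply/eqP; rewrite eq_le q_ge0 andbT leNgt; apply/negP => q_gt0.
  by move: w_le_N; rewrite ler_pMn2l // leqNgt N_lt.
rewrite q0 mul0r big1 // => g _.
have -> : w g = 0 by apply/le_anti; rewrite w_ge0 -q0 w_le.
by rewrite mulr0.
Qed.

End SortedPartialSums.

Definition quad_form (R : comPzRingType) (N : nat) (G : 'M[R]_N) (x : 'I_N -> R) : R :=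
  \sum_al \sum_be x al * x be * G al be.

Lemma quad_form_pairing (R : comPzRingType) (N : nat) (G : 'M[R]_N)
    (c : 'I_N -> R) (u v : 'I_N -> 'I_N -> R) :
  \sum_al \sum_be (\sum_g c g * (u g al * u g be + v g al * v g be)) * G al be
  = \sum_g c g * (quad_form G (u g) + quad_form G (v g)).
Proof.
under eq_bigr => al _ do under eq_bigr => be _ do rewrite mulr_suml.
under eq_bigr => al _ do rewrite exchange_big.
rewrite exchange_big; apply: eq_bigr => g _ /=.
rewrite /quad_form -big_split mulr_sumr; apply: eq_bigr => al _.
by rewrite -big_split mulr_sumr; apply: eq_bigr => be _ /=; ring.
Qed.

Lemma char_poly_conj (R : comUnitRingType) (N : nat) (P A : 'M[R]_N) :
  P \in unitmx -> char_poly (invmx P *m A *m P) = char_poly A.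
Proof.
move=> P_unit; rewrite /char_poly /char_poly_mx.
set Pi := map_mx polyC (invmx P); set Pc := map_mx polyC P.
have PiPc : Pi *m Pc = 1%:M by rewrite -map_mxM mulVmx // map_mx1.
have XE : ('X%:M : 'M[{poly R}]_N) = Pi *m 'X%:M *m Pc.
  by rewrite scalar_mxC -mulmxA PiPc mulmx1.
rewrite !map_mxM {1}XE -mulmxBl -mulmxBr !det_mulmx mulrAC -det_mulmx PiPc.
by rewrite det1 mul1r.
Qed.

Section ComplexParts.
Variable R : rcfType.

Lemma Re_conjM (z w : R[i]) :
  complex.Re (z^* * w) = complex.Re z * complex.Re w + complex.Im z * complex.Im w.
Proof. by case: z w => [a b] [a' b'] /=; ring. Qed.

Lemma Re_realM (c : R) (z : R[i]) : complex.Re (real_complex R c * z) = c * complex.Re z.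
Proof. by case: z => [a b] /=; ring. Qed.

Lemma Re_sum (I : Type) (r : seq I) (F : I -> R[i]) :
  complex.Re (\sum_(i <- r) F i) = \sum_(i <- r) complex.Re (F i).
Proof. exact: (@raddf_sum _ _ (@complex.Re R : Rcomplex R -> R)). Qed.

End ComplexParts.

(* The spectral theorem of the library lives over a numClosedFieldType, so
   the real symmetric A is diagonalised over R[i]; the eigenvector g enters
   through the real and imaginary parts of its coordinates. *)
Section RealSymmetricSpectral.
Variables (R : rcfType) (N : nat) (A : 'M[R]_N).
Hypothesis A_sym : A^T = A.
Local Notation Ac := (map_mx (real_complex R) A).
Local Notation P := (spectralmx Ac).
Local Open Scope sesquilinear_scope.

Definition sym_eig (g : 'I_N) : R := complex.Re (spectral_diag Ac 0 g).
Definition eigvec_re (g al : 'I_N) : R := complex.Re (P g al).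
Definition eigvec_im (g al : 'I_N) : R := complex.Im (P g al).

Lemma complexified_hermitian : Ac \is hermsymmx.
Proof.
apply/is_hermitianmxP; rewrite expr0 scale1r; apply/matrixP => al be.
rewrite !mxE -[in RHS]A_sym mxE; apply/esym/CrealP/complex_realP.
by exists (A al be).
Qed.

Lemma complexified_spectral : Ac = P^t* *m diag_mx (spectral_diag Ac) *m P.
Proof.
rewrite -invmx_unitary ?spectral_unitarymx //.
exact/orthomx_spectralP/hermitian_normalmx/complexified_hermitian.
Qed.

Lemma spectral_diag_sym_eig g : spectral_diag Ac 0 g = real_complex R (sym_eig g).
Proof.
rewrite /sym_eig.
by have /mxOverP/(_ 0 g)/complex_realP[x ->] :=
  hermitian_spectral_diag_real complexified_hermitian.
Qed.

Lemma sym_entryE al be :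
  A al be = \sum_g sym_eig g * (eigvec_re g al * eigvec_re g be
                                 + eigvec_im g al * eigvec_im g be).
Proof.
have := congr1 (fun M : 'M[R[i]]_N => complex.Re (M al be)) complexified_spectral.
rewrite mxE /= => ->; rewrite mxE Re_sum; apply: eq_bigr => g _.
by rewrite mul_mx_diag !mxE spectral_diag_sym_eig mulrAC mulrC Re_realM Re_conjM.
Qed.

Lemma eigvec_orthonormal al be :
  \sum_g (eigvec_re g al * eigvec_re g be + eigvec_im g al * eigvec_im g be)
  = (al == be)%:R.
Proof.
have /(congr1 (fun M : 'M[R[i]]_N => complex.Re (M al be))) : P^t* *m P = 1%:M.
  by rewrite -invmx_unitary ?spectral_unitarymx // mulVmx // spectral_unit.
rewrite !mxE Re_sum => E.
have -> : (al == be)%:R = complex.Re ((al == be)%:R : R[i]) by case: (al == be).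
by rewrite -E; apply: eq_bigr => g _; rewrite !mxE Re_conjM.
Qed.

Lemma eigvec_norm g : \sum_al (eigvec_re g al ^+ 2 + eigvec_im g al ^+ 2) = 1.
Proof.
have /(congr1 (fun M : 'M[R[i]]_N => complex.Re (M g g))) : P *m P^t* = 1%:M.
  exact/unitarymxP/spectral_unitarymx.
rewrite !mxE eqxx Re_sum => E.
by rewrite -[RHS]E; apply: eq_bigr => al _; rewrite !mxE mulrC Re_conjM !expr2.
Qed.

Lemma char_poly_sym_eig : char_poly A = \prod_g ('X - (sym_eig g)%:P).
Proof.
apply: (@map_poly_inj _ _ (real_complex R)).
rewrite map_char_poly map_prod_XsubC complexified_spectral.
rewrite -invmx_unitary ?spectral_unitarymx // char_poly_conj ?spectral_unit //.
rewrite char_poly_trig ?diag_mx_is_trig //.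
by apply: eq_bigr => g _; rewrite mxE eqxx mulr1n spectral_diag_sym_eig.
Qed.

Definition eig_weight (G : 'M[R]_N) (g : 'I_N) : R :=
  quad_form G (eigvec_re g) + quad_form G (eigvec_im g).

Lemma sym_pairingE (G : 'M[R]_N) :
  \sum_al \sum_be A al be * G al be = \sum_g sym_eig g * eig_weight G g.
Proof.
under eq_bigr => al _ do under eq_bigr => be _ do rewrite sym_entryE.
exact: quad_form_pairing.
Qed.

Lemma mxtrace_eig_weight (G : 'M[R]_N) : \tr G = \sum_g eig_weight G g.
Proof.
under [RHS]eq_bigr => g _ do rewrite -[eig_weight G g]mul1r.
rewrite -(quad_form_pairing G (fun=> 1) eigvec_re eigvec_im); apply: eq_bigr => al _.
under eq_bigr => be _ do under eq_bigr => g _ do rewrite mul1r.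
under eq_bigr => be _ do rewrite eigvec_orthonormal.
rewrite (bigD1 al) //= eqxx mul1r big1 ?addr0 // => be.
by rewrite eq_sym => /negbTE ->; rewrite mul0r.
Qed.

Lemma eig_weight_bounds (G : 'M[R]_N) (c : R) :
  (forall x, 0 <= quad_form G x) ->
  (forall x, quad_form G x <= c * \sum_al x al ^+ 2) ->
  forall g, 0 <= eig_weight G g <= c.
Proof.
move=> G_ge0 G_le g; rewrite addr_ge0 //=.
by rewrite -[c]mulr1 -(eigvec_norm g) big_split mulrDr /=; apply: lerD.
Qed.

End RealSymmetricSpectral.

Section HatGram.
Variables (R : realType) (n k : nat) (T : tensor R n k).

Lemma Lmat_sum_delta (L : bivec R n) a c :
  Lmat L a c = \sum_al L 0 al * Lmat (delta_mx 0 al) a c.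
Proof.
apply: eq_bigr => al _; congr (_ * _).
rewrite /Lmat (bigD1 al) //= big1 ?addr0 => [|be be_al]; first by rewrite mxE !eqxx mul1r.
by rewrite mxE (negbTE be_al) andbF mul0r.
Qed.

Lemma actT_sum_That (L : bivec R n) idx :
  actT L T idx = \sum_al L 0 al * That T al idx.
Proof.
under [RHS]eq_bigr => al _ do rewrite /That /actT mulrN mulr_sumr.
rewrite sumrN exchange_big; congr (- _); apply: eq_bigr => i _ /=.
under [RHS]eq_bigr => al _ do rewrite mulr_sumr.
rewrite exchange_big; apply: eq_bigr => c _ /=.
by rewrite Lmat_sum_delta mulr_suml; apply: eq_bigr => al _; rewrite mulrA.
Qed.

Definition hat_gram : 'M[R]_(N2 n) :=
  \matrix_(al, be) \sum_i That T al i * That T be i.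

Lemma tnorm2_ge0 (S : tensor R n k) : 0 <= tnorm2 S.
Proof. by apply: sumr_ge0 => i _; apply: sqr_ge0. Qed.

Lemma quad_form_hat_gram x : quad_form hat_gram x = tnorm2 (actT (\row_al x al) T).
Proof.
rewrite /tnorm2; under [RHS]eq_bigr => i _ do rewrite actT_sum_That expr2 mulr_suml.
rewrite exchange_big; apply: eq_bigr => al _ /=.
under [RHS]eq_bigr => i _ do rewrite mulr_sumr.
rewrite exchange_big; apply: eq_bigr => be _ /=.
rewrite !mxE mulr_sumr; apply: eq_bigr => i _.
by ring.
Qed.

Lemma quad_form_hat_gram_le (c : R) :
  (forall L : bivec R n, tnorm2 (actT L T) <= c * bnorm2 L) ->
  forall x, quad_form hat_gram x <= c * \sum_al x al ^+ 2.
Proof.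
move=> hatT_bound x; rewrite quad_form_hat_gram; apply: le_trans (hatT_bound _) _.
by rewrite /bnorm2; under eq_bigr => al _ do rewrite mxE.
Qed.

Lemma RThat_hat_gram (Rop : 'M[R]_(N2 n)) :
  RThat Rop T = \sum_al \sum_be Rop al be * hat_gram al be.
Proof. by apply: eq_bigr => al _; apply: eq_bigr => be _; rewrite mxE. Qed.

Lemma That_norm2_hat_gram : That_norm2 T = \tr hat_gram.
Proof.
apply: eq_bigr => al _; rewrite mxE; apply: eq_bigr => i _.
by rewrite expr2.
Qed.

Lemma That_norm2_gt0 : (exists al i, That T al i != 0) -> 0 < That_norm2 T.
Proof.
move=> [al [i That_neq0]].
rewrite lt_def sumr_ge0 ?andbT => [|be _]; last exact: tnorm2_ge0.
rewrite psumr_neq0 => [|be _]; last exact: tnorm2_ge0.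
apply/hasP; exists al; rewrite ?mem_index_enum //= lt_def tnorm2_ge0 andbT.
rewrite psumr_neq0 => [|j _]; last exact: sqr_ge0.
by apply/hasP; exists i; rewrite ?mem_index_enum //= exprn_even_gt0 ?That_neq0 ?orbT.
Qed.

End HatGram.

Unset Implicit Arguments. Set Strict Implicit.

Theorem lemma2p1 (R : realType) (n k : nat) (Rop : 'M[R]_(N2 n))
  (lam : 'I_(N2 n) -> R) (T : tensor R n k) (C kappa : R) :
  algebraic_curvature_operator Rop ->
  sorted_eigenvalues Rop lam ->
  1 <= C ->
  (forall L : bivec R n,
      tnorm2 (actT L T) <= C^-1 * That_norm2 T * bnorm2 L) ->
  kappa <= 0 ->
  ((Num.truncn C)%:R^-1 * eig_partial_sum lam (Num.truncn C) >= kappa ->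
     RThat Rop T >= kappa * That_norm2 T) /\
  (eig_partial_sum lam (Num.truncn C) > 0 ->
     (exists (al : 'I_(N2 n)) (i : {ffun 'I_k -> 'I_n}), That T al i != 0) ->
     RThat Rop T > 0).
Proof.
move=> [Rop_sym _] [lam_sorted lam_char] C_ge1 hatT_bound _.
set t := That_norm2 T; set m := Num.truncn C; set G := hat_gram T.
have C_gt0 : 0 < C by apply: lt_le_trans C_ge1.
have m_gt0 : (0 < m)%N by rewrite truncn_gt0.
have t_ge0 : 0 <= t by rewrite sumr_ge0 // => al _; apply: tnorm2_ge0.
have G_ge0 x : 0 <= quad_form G x by rewrite quad_form_hat_gram tnorm2_ge0.
have w_bnd g : 0 <= eig_weight Rop G g <= t / m%:R.
  have /andP[-> /le_trans -> //] :=
    eig_weight_bounds Rop G_ge0 (quad_form_hat_gram_le hatT_bound) g.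
  rewrite mulrC ler_wpM2l // lef_pV2 ?posrE ?ltr0n //.
  by rewrite truncn_le ltW.
have w_sum : \sum_g eig_weight Rop G g = t / m%:R *+ m.
  rewrite -mxtrace_eig_weight -That_norm2_hat_gram -mulr_natr.
  by rewrite divfK // pnatr_eq0 -lt0n.
have eig_perm : perm_eq [seq sym_eig Rop g | g <- index_enum 'I_(N2 n)]
                        [seq lam i | i <- index_enum 'I_(N2 n)].
  by apply: prod_XsubC_eq; rewrite !big_map -lam_char char_poly_sym_eig.
have key := partial_sum_le_weighted lam_sorted eig_perm m_gt0 w_bnd w_sum.
rewrite RThat_hat_gram sym_pairingE //.
split=> [kappa_le | sum_gt0 /That_norm2_gt0 t_gt0].
  by apply: le_trans key; rewrite mulrC -mulrA; apply: ler_wpM2l.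
by apply: lt_le_trans key; rewrite mulr_gt0 // divr_gt0 // ltr0n.
Qed.
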